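(* Let $\mathcal{S}=(S,\overline{S})$ be a bisection of minimal potential. Then for all $x\in S$ and $y\in\overline{S}$, $$\mathrm{def}_{\mathcal{S}}(x)+\mathrm{def}_{\mathcal{S}}(y)+2W(x,y)\ge a_x-a_y.$$
   Context: $G$ is a finite simple undirected graph with an odd number $n$ of vertices, each vertex $x$ having stubbornness $\alpha_x\in(0,1)$ and $a_x=\lfloor\alpha_x/(1-\alpha_x)\rfloor$. For vertex sets $A,B$, $W(A,B)$ is the number of edges with one endpoint in $A$ and the other in $B$ (so $W(x,y)=1$ iff $x,y$ are adjacent). A bisection $(S,\overline{S})$ partitions the vertices with $|S|=\frac{n+1}{2}$, $|\overline{S}|=\frac{n-1}{2}$. Deficiency: $\mathrm{def}_{\mathcal{S}}(x)=W(x,S)-W(x,\overline{S})$ for $x\in S$, and $W(x,\overline{S})-W(x,S)$ for $x\in\overline{S}$. Potential: $\Phi(S,\overline{S})=W(S,\overline{S})+\frac12\big(\sum_{x\in S}a_x-\sum_{y\in\overline{S}}a_y\big)$. $\mathcal{S}$ has minimal potential if $\Phi(S,\overline{S})\le\Phi(S\setminus\{x\}\cup\{y\},\overline{S}\setminus\{y\}\cup\{x\})$ for all $x\in S$, $y\in\overline{S}$. *)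

From mathcomp Require Import all_boot all_order all_algebra.
Set Implicit Arguments. Unset Strict Implicit. Unset Printing Implicit Defensive.
Import Order.TTheory GRing.Theory Num.Theory.
Local Open Scope ring_scope.

Definition simple_graph (T : finType) (e : rel T) : Prop :=
  symmetric e /\ irreflexive e.

(* W(A,B): number of edges with one endpoint in A and the other in B,
   counted as ordered pairs (u,v) with u in A, v in B, u ~ v.
   (Used only for disjoint A, B, where this is exactly the edge count.) *)
Definition W (T : finType) (e : rel T) (A B : {set T}) : nat :=
  #|[set p : T * T | [&& p.1 \in A, p.2 \in B & e p.1 p.2]]|.

Definition a_of (R : archiRealFieldType) (alpha : R) : int :=
  Num.floor (alpha / (1 - alpha)).

Definition bisection (T : finType) (S : {set T}) : Prop :=
  (#|S| = (#|T|).+1./2)%N.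

Definition deficiency (T : finType) (e : rel T) (S : {set T}) (x : T) : int :=
  if x \in S then (W e [set x] S)%:Z - (W e [set x] (~: S))%:Z
  else (W e [set x] (~: S))%:Z - (W e [set x] S)%:Z.

Definition potential (R : archiRealFieldType) (T : finType) (e : rel T)
    (alpha : T -> R) (S : {set T}) : R :=
  (W e S (~: S))%:R
  + 2^-1 * ((\sum_(x in S) a_of (alpha x))%:~R
             - (\sum_(y in ~: S) a_of (alpha y))%:~R).

Definition minimal_potential (R : archiRealFieldType) (T : finType) (e : rel T)
    (alpha : T -> R) (S : {set T}) : Prop :=
  forall x y, x \in S -> y \notin S ->
    potential e alpha S <= potential e alpha (y |: (S :\ x)).

From mathcomp Require Import all_boot all_order all_algebra zify ring.
Import Order.TTheory GRing.Theory Num.Theory.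
Local Open Scope ring_scope.

(* Swapping x in S with y outside S changes the cut W(S, ~S) by exactly
   def(x) + def(y) + 2 W(x,y) and the weight term of the potential by
   a_y - a_x, so minimality of the potential is the claimed inequality. *)

Section Swap.

Variable T : finType.
Implicit Types (A B S : {set T}) (x y : T).

Lemma setC_setU1D1 S x y : x \in S -> y \notin S ->
  ~: (y |: (S :\ x)) = x |: (~: S :\ y).
Proof.
move=> xS yS; apply/setP => z; rewrite !inE.
have yx : y != x by apply: contraNneq yS => ->.
have [->|zx] := eqVneq z x; first by rewrite xS eq_sym (negbTE yx).
have [->|zy] := eqVneq z y; first by rewrite yS.
by case: (z \in S).
Qed.

Lemma big_setU1D1 (V : nmodType) (f : T -> V) A x y : x \in A -> y \notin A ->
  \sum_(z in y |: (A :\ x)) f z + f x = \sum_(z in A) f z + f y.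
Proof.
move=> xA yA; rewrite (big_setD1 x xA) big_setU1 ?inE ?(negbTE yA) ?andbF //=.
by rewrite addrAC [RHS]addrAC [f y + f x]addrC.
Qed.

Variable e : rel T.

Lemma W_sum A B : W e A B = (\sum_(u in A) \sum_(v in B) (e u v : nat))%N.
Proof.
rewrite /W -sum1_card pair_big_dep /= [RHS]big_mkcond [LHS]big_mkcond /=.
apply: eq_bigr => [[u v]] _; rewrite !inE /=.
by case: (u \in A); case: (v \in B); case: (e u v).
Qed.

Lemma W_setU1l x A B : x \notin A -> W e (x |: A) B = (W e [set x] B + W e A B)%N.
Proof. by move=> xA; rewrite !W_sum big_setU1 //= big_set1. Qed.

Lemma W_setU1r x A B : x \notin B -> W e A (x |: B) = (W e A [set x] + W e A B)%N.
Proof.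
move=> xB; rewrite !W_sum -big_split /=; apply: eq_bigr => u _.
by rewrite big_setU1 //= big_set1.
Qed.

Lemma W_set1 x y : W e [set x] [set y] = e x y.
Proof. by rewrite W_sum !big_set1. Qed.

Hypothesis e_sym : symmetric e.
Hypothesis e_irr : irreflexive e.

Lemma W_sym A B : W e A B = W e B A.
Proof.
rewrite !W_sum exchange_big /=; apply: eq_bigr => u _.
by apply: eq_bigr => v _; rewrite e_sym.
Qed.

Lemma cut_swap S x y : x \in S -> y \notin S ->
  (W e (y |: (S :\ x)) (~: (y |: (S :\ x))))%:Z - (W e S (~: S))%:Z
  = deficiency e S x + deficiency e S y + 2 * (W e [set x] [set y])%:Z.
Proof.
move=> xS yS; rewrite setC_setU1D1 // /deficiency xS (negbTE yS).
set S0 := S :\ x; set C0 := ~: S :\ y.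
have xS0 : x \notin S0 by rewrite !inE eqxx.
have yS0 : y \notin S0 by rewrite !inE (negbTE yS) andbF.
have xC0 : x \notin C0 by rewrite !inE xS andbF.
have yC0 : y \notin C0 by rewrite !inE eqxx.
have -> : ~: S = y |: C0 by rewrite setD1K // inE.
have -> : S = x |: S0 by rewrite setD1K.
rewrite !W_setU1l // !W_setU1r // !W_set1.
rewrite (W_sym S0 [set x]) (W_sym S0 [set y]) (e_sym y x) !e_irr.
lia.
Qed.

Lemma potential_swap (R : archiRealFieldType) (alpha : T -> R) S x y :
  x \in S -> y \notin S ->
  potential e alpha (y |: (S :\ x)) - potential e alpha S
  = (deficiency e S x + deficiency e S y + 2 * (W e [set x] [set y])%:Z
     + a_of (alpha y) - a_of (alpha x))%:~R.
Proof.
move=> xS yS; rewrite /potential -addrA rmorphD -cut_swap //.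
set a := fun z => a_of (alpha z).
have sumS : \sum_(z in y |: (S :\ x)) a z = \sum_(z in S) a z + a y - a x.
  by rewrite -(@big_setU1D1 _ a _ _ _ xS yS) addrK.
have sumC : \sum_(z in ~: (y |: (S :\ x))) a z = \sum_(z in ~: S) a z + a x - a y.
  have yC : y \in ~: S by rewrite inE.
  have xC : x \notin ~: S by rewrite inE xS.
  by rewrite setC_setU1D1 // -(@big_setU1D1 _ a _ _ _ yC xC) addrK.
rewrite sumS sumC !(rmorphB, rmorphD) /=.
by field.
Qed.

End Swap.

Theorem lemma2 (R : archiRealFieldType) (T : finType) (e : rel T) (alpha : T -> R)
  (Hg : simple_graph e) (Hodd : odd #|T|)
  (Halpha : forall x, 0 < alpha x < 1)
  (S : {set T}) (HS : bisection S) (Hmin : minimal_potential e alpha S) :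
  forall x y, x \in S -> y \notin S ->
    deficiency e S x + deficiency e S y + 2 * (W e [set x] [set y])%:Z
      >= a_of (alpha x) - a_of (alpha y).
Proof.
move=> x y xS yS; case: Hg => e_sym e_irr.
have := Hmin x y xS yS; rewrite -subr_ge0 potential_swap // ler0z.
lia.
Qed.
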